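(* Let $(X,d)$ be a finite metric space, $S\subseteq X$, $\tau\ge0$, and $L\ge 2$, and assume there exists a $1$-Lipschitz map $\varphi:X\to L_2$ satisfying $\|\varphi(x)-\varphi(y)\|_2\ge \tau/L$ for all $x,y\in S$ with $d(x,y)\in[\tau/2,3\tau]$. Then there is a $1$-Lipschitz map $h:X\to L_2$ with $$\|h(x)-h(y)\|_2\ge\frac{\tau}{9L}$$ whenever $x,y\in X$, $d(x,S)\le \frac{\tau}{6L}$, and $d(x,y)\in[\tau,2\tau]$.
   Context: $L_2$ denotes a Hilbert space; $d(x,S)=\min_{s\in S}d(x,s)$. *)

From HB Require Import structures.
From mathcomp Require Import all_boot all_order all_algebra.
From mathcomp Require Import reals.
Set Implicit Arguments. Unset Strict Implicit. Unset Printing Implicit Defensive.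
Import Order.TTheory GRing.Theory Num.Theory.
Local Open Scope ring_scope.

Definition is_metric (R : realType) (X : Type) (d : X -> X -> R) : Prop :=
  (forall x y, 0 <= d x y) /\
  (forall x y, d x y = 0 <-> x = y) /\
  (forall x y, d x y = d y x) /\
  (forall x y z, d x z <= d x y + d y z).

Definition enorm (R : realType) (n : nat) (v : 'rV[R]_n) : R :=
  Num.sqrt (\sum_(i < n) v ord0 i ^+ 2).

Definition lip1 (R : realType) (X : Type) (d : X -> X -> R) (n : nat)
  (f : X -> 'rV[R]_n) : Prop :=
  forall x y, enorm (f x - f y) <= d x y.

From HB Require Import structures.
From mathcomp Require Import all_boot all_order all_algebra.
From mathcomp Require Import reals ring lra.
Set Implicit Arguments. Unset Strict Implicit. Unset Printing Implicit Defensive.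
Import Order.TTheory GRing.Theory Num.Theory.
Local Open Scope ring_scope.

(* With k := tau / (3 L), take h := (phi, g) / 2, where g x := min (3k/2, d(x, S))
   is 1-Lipschitz, so that h is 1-Lipschitz.  Let s in S with d(x, s) <= k/2 and
   tau <= d(x, y) <= 2 tau.  If d(y, s') <= 3k/2 for some s' in S, then
   d(s, s') lies in [tau - 2k, 2 tau + 2k], inside [tau/2, 3 tau] as 6k <= tau;
   hence |phi s - phi s'| >= 3k and |phi x - phi y| >= 3k - k/2 - 3k/2 = k.
   Otherwise g y = 3k/2 while g x <= k/2.  Either way one half of h separates
   x and y by k/2 >= tau / (9 L). *)

Section EuclideanNorm.
Variable R : realType.

Definition sqnorm n (v : 'rV[R]_n) : R := \sum_i v ord0 i ^+ 2.

Definition dotr n (u v : 'rV[R]_n) : R := \sum_i u ord0 i * v ord0 i.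

Lemma sqnorm_ge0 n (v : 'rV[R]_n) : 0 <= sqnorm v.
Proof. by apply: sumr_ge0 => i _; rewrite sqr_ge0. Qed.

Lemma enorm_ge0 n (v : 'rV[R]_n) : 0 <= enorm v.
Proof. exact: sqrtr_ge0. Qed.

Lemma sqr_enorm n (v : 'rV[R]_n) : enorm v ^+ 2 = sqnorm v.
Proof. exact/sqr_sqrtr/sqnorm_ge0. Qed.

Lemma enorm_le n (v : 'rV[R]_n) c :
  0 <= c -> (enorm v <= c) = (sqnorm v <= c ^+ 2).
Proof. by move=> c0; rewrite -ler_sqr ?nnegrE ?enorm_ge0 ?sqr_enorm. Qed.

Lemma sqnormD n (u v : 'rV[R]_n) :
  sqnorm (u + v) = sqnorm u + sqnorm v + 2 * dotr u v.
Proof.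
rewrite /sqnorm /dotr mulr_sumr -!big_split /=.
by apply: eq_bigr => i _; rewrite !mxE; ring.
Qed.

Lemma lagrange_identity n (u v : 'rV[R]_n) :
  \sum_i \sum_j (u ord0 i * v ord0 j - u ord0 j * v ord0 i) ^+ 2 =
  2 * (sqnorm u * sqnorm v - dotr u v ^+ 2).
Proof.
rewrite /sqnorm /dotr expr2 !big_distrlr /=.
have swap : \sum_(i < n) \sum_(j < n) u ord0 j ^+ 2 * v ord0 i ^+ 2 =
            \sum_(i < n) \sum_(j < n) u ord0 i ^+ 2 * v ord0 j ^+ 2.
  by rewrite exchange_big.
transitivity (\sum_(i < n) \sum_(j < n) (u ord0 i ^+ 2 * v ord0 j ^+ 2
    + u ord0 j ^+ 2 * v ord0 i ^+ 2 - 2 * (u ord0 i * v ord0 i * (u ord0 j * v ord0 j)))).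
  by apply: eq_bigr => i _; apply: eq_bigr => j _; ring.
under [LHS]eq_bigr do rewrite sumrB big_split /= -(mulr_sumr _ _ _ 2).
by rewrite sumrB big_split /= -(mulr_sumr _ _ _ 2) swap; ring.
Qed.

Lemma dotr_le_enorm n (u v : 'rV[R]_n) : dotr u v <= enorm u * enorm v.
Proof.
have [uv_le0|uv_gt0] := leP (dotr u v) 0.
  by apply: le_trans uv_le0 _; rewrite mulr_ge0 ?enorm_ge0.
rewrite -ler_sqr ?nnegrE ?mulr_ge0 ?enorm_ge0 ?(ltW uv_gt0) // exprMn !sqr_enorm.
rewrite -subr_ge0 -(pmulr_rge0 _ (ltr0n R 2)) -lagrange_identity.
by do 2![apply: sumr_ge0 => ? _]; apply: sqr_ge0.
Qed.

Lemma enormD n (u v : 'rV[R]_n) : enorm (u + v) <= enorm u + enorm v.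
Proof.
rewrite enorm_le ?addr_ge0 ?enorm_ge0 // sqnormD sqrrD !sqr_enorm.
by have := dotr_le_enorm u v; lra.
Qed.

Lemma enormN n (v : 'rV[R]_n) : enorm (- v) = enorm v.
Proof. by congr Num.sqrt; apply: eq_bigr => i _; rewrite mxE sqrrN. Qed.

Lemma enorm_distC n (u v : 'rV[R]_n) : enorm (u - v) = enorm (v - u).
Proof. by rewrite -enormN opprB. Qed.

Lemma enormZ n c (v : 'rV[R]_n) : enorm (c *: v) = `|c| * enorm v.
Proof.
rewrite /enorm -sqrtr_sqr -sqrtrM ?sqr_ge0 // mulr_sumr.
by congr Num.sqrt; apply: eq_bigr => i _; rewrite mxE exprMn.
Qed.

Lemma sqnorm_row_mx n m (u : 'rV[R]_n) (v : 'rV[R]_m) :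
  sqnorm (row_mx u v) = sqnorm u + sqnorm v.
Proof.
rewrite /sqnorm big_split_ord /=.
by congr (_ + _); apply: eq_bigr => i _; rewrite (row_mxEl, row_mxEr).
Qed.

Lemma enorm_row_mx_le n m (u : 'rV[R]_n) (v : 'rV[R]_m) :
  enorm (row_mx u v) <= enorm u + enorm v.
Proof.
rewrite enorm_le ?addr_ge0 ?enorm_ge0 // sqnorm_row_mx sqrrD !sqr_enorm.
by have := mulr_ge0 (enorm_ge0 u) (enorm_ge0 v); lra.
Qed.

Lemma enorm_row_mxl_ge n m (u : 'rV[R]_n) (v : 'rV[R]_m) :
  enorm u <= enorm (row_mx u v).
Proof. by rewrite enorm_le ?enorm_ge0 // sqr_enorm sqnorm_row_mx lerDl sqnorm_ge0. Qed.

Lemma enorm_row_mxr_ge n m (u : 'rV[R]_n) (v : 'rV[R]_m) :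
  enorm v <= enorm (row_mx u v).
Proof. by rewrite enorm_le ?enorm_ge0 // sqr_enorm sqnorm_row_mx lerDr sqnorm_ge0. Qed.

Lemma enorm_const_mx1B a b : enorm (const_mx a - const_mx b : 'rV[R]_1) = `|a - b|.
Proof. by rewrite /enorm big_ord1 !mxE sqrtr_sqr. Qed.

End EuclideanNorm.

Lemma ler_dist_min (R : realDomainType) (a a' b b' e : R) :
  `|a - a'| <= e -> `|b - b'| <= e -> `|Num.min a b - Num.min a' b'| <= e.
Proof.
rewrite !ler_norml => /andP[? ?] /andP[? ?].
by have [?|?] := leP a b; have [?|?] := leP a' b'; apply/andP; split; lra.
Qed.

Lemma metric_perturb_ends (R : realType) (X : Type) (d : X -> X -> R) x y s s' :
  is_metric d -> d x y - (d x s + d y s') <= d s s' <= d x y + (d x s + d y s').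
Proof.
move=> [_ [_ [d_sym d_tri]]].
have := d_tri x s' y; have := d_tri x s s'; have := d_tri s x s'; have := d_tri x y s'.
by rewrite [d s x]d_sym [d s' y]d_sym => *; apply/andP; split; lra.
Qed.

Section LipschitzMaps.
Variables (R : realType) (X : Type) (d : X -> X -> R).

Lemma lip1_const_mx1 (g : X -> R) : (forall x y, `|g x - g y| <= d x y) ->
  lip1 d (fun x => const_mx (g x) : 'rV[R]_1).
Proof. by move=> gP x y; rewrite enorm_const_mx1B. Qed.

Lemma lip1_enormB_ge n (f : X -> 'rV[R]_n) x y s s' : lip1 d f ->
  enorm (f s - f s') - (d x s + d y s') <= enorm (f x - f y).
Proof.
move=> fP; have -> : f s - f s' = (f s - f x) + (f x - f y) + (f y - f s').
  by rewrite !addrA !subrK.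
have := enormD (f s - f x + (f x - f y)) (f y - f s').
have := enormD (f s - f x) (f x - f y).
have := fP y s'; have := fP x s; rewrite enorm_distC; lra.
Qed.

Definition half_pair n m (f : X -> 'rV[R]_n) (g : X -> 'rV[R]_m) (x : X) :
    'rV[R]_(n + m) :=
  2^-1 *: row_mx (f x) (g x).

Variables (n m : nat) (f : X -> 'rV[R]_n) (g : X -> 'rV[R]_m).

Lemma enorm_half_pairB x y : enorm (half_pair f g x - half_pair f g y) =
  enorm (row_mx (f x - f y) (g x - g y)) / 2.
Proof.
rewrite /half_pair -scalerBr opp_row_mx add_row_mx enormZ.
by rewrite gtr0_norm ?invr_gt0 // mulrC.
Qed.

Lemma lip1_half_pair : lip1 d f -> lip1 d g -> lip1 d (half_pair f g).
Proof.
move=> fP gP x y; rewrite enorm_half_pairB.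
have := enorm_row_mx_le (f x - f y) (g x - g y).
by have := fP x y; have := gP x y; lra.
Qed.

Lemma enorm_half_pairB_gel x y :
  enorm (f x - f y) / 2 <= enorm (half_pair f g x - half_pair f g y).
Proof. by rewrite enorm_half_pairB ler_pM2r ?invr_gt0 ?enorm_row_mxl_ge. Qed.

Lemma enorm_half_pairB_ger x y :
  enorm (g x - g y) / 2 <= enorm (half_pair f g x - half_pair f g y).
Proof. by rewrite enorm_half_pairB ler_pM2r ?invr_gt0 ?enorm_row_mxr_ge. Qed.

End LipschitzMaps.

Section TruncatedSetDistance.
Variables (R : realType) (X : finType) (d : X -> X -> R).

Definition trunc_setdist (a : R) (S : {set X}) (x : X) : R :=
  \big[Num.min/a]_(s in S) d x s.

Variables (a : R) (S : {set X}).

Lemma trunc_setdist_le x s : s \in S -> trunc_setdist a S x <= d x s.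
Proof. exact: bigmin_le_cond. Qed.

Lemma trunc_setdist_id x :
  (forall s, s \in S -> a <= d x s) -> trunc_setdist a S x = a.
Proof. exact: bigmin_eq_id. Qed.

Lemma trunc_setdist_lip : is_metric d ->
  forall x y, `|trunc_setdist a S x - trunc_setdist a S y| <= d x y.
Proof.
move=> [d_ge0 [_ [d_sym d_tri]]] x y.
apply: (big_ind2 (fun u v => `|u - v| <= d x y)) => [|u u' v v'|s _].
- by rewrite subrr normr0 d_ge0.
- exact: ler_dist_min.
- rewrite ler_norml; have := d_tri x y s; have := d_tri y x s.
  by rewrite (d_sym y x); lra.
Qed.

End TruncatedSetDistance.

Theorem lemma4p2 (R : realType) (X : finType) (d : X -> X -> R)
  (S : {set X}) (tau L : R) :
  is_metric d -> 0 <= tau -> 2 <= L ->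
  (exists (n : nat) (phi : X -> 'rV[R]_n), lip1 d phi /\
     forall x y, x \in S -> y \in S -> tau / 2 <= d x y <= 3 * tau ->
       tau / L <= enorm (phi x - phi y)) ->
  exists (m : nat) (h : X -> 'rV[R]_m), lip1 d h /\
     forall x y, (exists2 s, s \in S & d x s <= tau / (6 * L)) ->
       tau <= d x y <= 2 * tau ->
       tau / (9 * L) <= enorm (h x - h y).
Proof.
move=> d_metric tau_ge0 L_ge2 [n [phi [phi_lip phi_sep]]].
set k := tau / (3 * L).
have k_ge0 : 0 <= k by rewrite divr_ge0 //; lra.
have tau_ge6k : 6 * k <= tau.
  have -> : tau = 3 * L * k by rewrite /k; field; lra.
  nra.
have tau_div : [/\ tau / L = 3 * k, tau / (6 * L) = k / 2 & tau / (9 * L) = k / 3].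
  by rewrite /k; split; field; lra.
case: tau_div => tau_L -> ->; rewrite {}tau_L in phi_sep.
pose g := trunc_setdist d (3 * k / 2) S.
pose gv x : 'rV[R]_1 := const_mx (g x).
exists (n + 1)%N, (half_pair phi gv); split.
  by apply: lip1_half_pair phi_lip _; apply/lip1_const_mx1/trunc_setdist_lip.
move=> x y [s sS dxs] /andP[dxy_ge dxy_le].
have [s' /andP[s'S dys']|far_y] :=
  pickP (fun s' => (s' \in S) && (d y s' <= 3 * k / 2)).
- have dss' : tau / 2 <= d s s' <= 3 * tau.
    have /andP[? ?] := metric_perturb_ends x y s s' d_metric.
    by apply/andP; split; lra.
  have := phi_sep s s' sS s'S dss'; have := lip1_enormB_ge x y s s' phi_lip.
  have := enorm_half_pairB_gel phi gv x y; lra.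
- have gy : g y = 3 * k / 2.
    apply: trunc_setdist_id => s' s'S.
    by move/negbT: (far_y s'); rewrite s'S -ltNge => /ltW.
  have gx : g x <= k / 2 := le_trans (trunc_setdist_le _ _ _ sS) dxs.
  have := enorm_half_pairB_ger phi gv x y.
  by rewrite enorm_const_mx1B gy ler0_norm; lra.
Qed.
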